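(* Let $\mathcal{L}$ be a language with semantic structure $\mathcal{S}=(\Sigma,I)$ and let $A$ be an abstract domain of $\wp(\Sigma)_\subseteq$ with Galois insertion $(\alpha,\wp(\Sigma),A,\gamma)$. (1) If $\mathcal{S}^\sharp_1=(A,I^\sharp_1)$ and $\mathcal{S}^\sharp_2=(A,I^\sharp_2)$ are abstract semantic structures on $A$ whose abstract semantics $[\![\cdot]\!]_{\mathcal{S}^\sharp_1}$ and $[\![\cdot]\!]_{\mathcal{S}^\sharp_2}$ are both strongly preserving for $\mathcal{L}$, then $[\![\cdot]\!]_{\mathcal{S}^\sharp_1}=[\![\cdot]\!]_{\mathcal{S}^\sharp_2}$. (2) If $\mathcal{S}^\sharp=(A,I^\sharp)$ is an abstract semantic structure on $A$ whose abstract semantics is strongly preserving for $\mathcal{L}$, then the abstract semantics $[\![\cdot]\!]^A_{\mathcal{S}}$ induced by $A$ is strongly preserving for $\mathcal{L}$.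
   Context: A language $\mathcal{L}$ has formulae $\varphi::=p\mid f(\varphi_1,\dots,\varphi_n)$, $p$ in a set $AP$ of atoms, $f$ in a finite set $Op$ of operators of arity $\ge1$. A semantic structure $\mathcal{S}=(\Sigma,I)$ gives $\mathbf{p}=I(p)\subseteq\Sigma$ and $\mathbf{f}=I(f):\wp(\Sigma)^{n}\to\wp(\Sigma)$, with $[\![p]\!]_{\mathcal{S}}=\mathbf{p}$, $[\![f(\varphi_1,..,\varphi_n)]\!]_{\mathcal{S}}=\mathbf{f}([\![\varphi_1]\!]_{\mathcal{S}},..,[\![\varphi_n]\!]_{\mathcal{S}})$. A Galois insertion $(\alpha,\wp(\Sigma),A,\gamma)$: $A$ complete lattice, monotone $\alpha,\gamma$ with $\alpha(S)\le_A a\iff S\subseteq\gamma(a)$, $\alpha\circ\gamma=\mathrm{id}$. An abstract semantic structure $(A,I^\sharp)$ assigns $I^\sharp(p)\in A$, $I^\sharp(f):A^n\to A$ and induces $[\![\cdot]\!]_{\mathcal{S}^\sharp}:\mathcal{L}\to A$ compositionally. The abstract semantics induced by $A$ is that of the structure $(A,I^A)$ with $I^A(p)=\alpha(\mathbf{p})$, $I^A(f)=\alpha\circ\mathbf{f}\circ(\gamma,\dots,\gamma)$; it is written $[\![\cdot]\!]^A_{\mathcal{S}}$. An abstract semantics $[\![\cdot]\!]^\sharp:\mathcal{L}\to A$ is strongly preserving for $\mathcal{L}$ if for all $\varphi\in\mathcal{L}$, $S\subseteq\Sigma$: $\alpha(S)\le_A[\![\varphi]\!]^\sharp\iff S\subseteq[\![\varphi]\!]_{\mathcal{S}}$.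 *)

From mathcomp Require Import all_boot all_order.
Set Implicit Arguments. Unset Strict Implicit. Unset Printing Implicit Defensive.
Import Order.TTheory.
Local Open Scope order_scope.

Definition pset (Sigma : Type) := Sigma -> Prop.
Definition psubset (Sigma : Type) (S T : pset Sigma) : Prop := forall s, S s -> T s.

Inductive form (AP : Type) (Op : Type) (arity : Op -> nat) : Type :=
| fatom : AP -> form AP arity
| fapp : forall f : Op, ('I_(arity f) -> form AP arity) -> form AP arity.
Arguments fatom {AP Op arity} _.
Arguments fapp {AP Op arity} f _.

Fixpoint sem (AP Op : Type) (arity : Op -> nat) (D : Type)
  (Ip : AP -> D) (If : forall f : Op, ('I_(arity f) -> D) -> D)
  (phi : form AP arity) : D :=
  match phi with
  | fatom p => Ip p
  | fapp f args => If f (fun i => sem Ip If (args i))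
  end.

Definition complete_lattice (d : Order.disp_t) (A : porderType d) : Prop :=
  forall X : A -> Prop, exists s : A,
    (forall x, X x -> x <= s) /\ (forall u, (forall x, X x -> x <= u) -> s <= u).

Definition galois_insertion (Sigma : Type) (d : Order.disp_t) (A : porderType d)
  (alpha : pset Sigma -> A) (gamma : A -> pset Sigma) : Prop :=
  complete_lattice A /\
  (forall S T, psubset S T -> alpha S <= alpha T) /\
  (forall a b, a <= b -> psubset (gamma a) (gamma b)) /\
  (forall S a, alpha S <= a <-> psubset S (gamma a)) /\
  (forall a, alpha (gamma a) = a).

Definition strongly_preserving (AP Op : Type) (arity : Op -> nat) (Sigma : Type)
  (Ip : AP -> pset Sigma) (If : forall f : Op, ('I_(arity f) -> pset Sigma) -> pset Sigma)
  (d : Order.disp_t) (A : porderType d) (alpha : pset Sigma -> A)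
  (asem : form AP arity -> A) : Prop :=
  forall (phi : form AP arity) (S : pset Sigma),
    alpha S <= asem phi <-> psubset S (sem Ip If phi).

Definition induced_Ip (AP Sigma : Type) (d : Order.disp_t) (A : porderType d)
  (alpha : pset Sigma -> A) (Ip : AP -> pset Sigma) : AP -> A :=
  fun p => alpha (Ip p).
Definition induced_If (Op : Type) (arity : Op -> nat) (Sigma : Type)
  (d : Order.disp_t) (A : porderType d)
  (alpha : pset Sigma -> A) (gamma : A -> pset Sigma)
  (If : forall f : Op, ('I_(arity f) -> pset Sigma) -> pset Sigma) :
  forall f : Op, ('I_(arity f) -> A) -> A :=
  fun f xs => alpha (If f (fun i => gamma (xs i))).

From mathcomp Require Import all_boot all_order.
From Stdlib Require Import FunctionalExtensionality PropExtensionality.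
Import Order.POrderTheory.
Local Open Scope order_scope.

(* A strongly preserving abstract semantics is forced to be [alpha] of the
   concrete one: taking [S] to be the concrete meaning gives one inequality,
   and taking [S := gamma a] gives the other.  The same equivalence makes
   every concrete meaning a fixpoint of [gamma \o alpha], so the semantics
   induced by [A] computes [alpha] of the concrete meaning as well, hence
   coincides with any strongly preserving one. *)

Lemma pset_ext (Sigma : Type) (S T : pset Sigma) :
  psubset S T -> psubset T S -> S = T.
Proof.
move=> ST TS; apply: functional_extensionality => s.
by apply: propositional_extensionality; split; [apply: ST | apply: TS].
Qed.

Section StrongPreservation.

Context {Sigma : Type} {d : Order.disp_t} {A : porderType d}.
Context {alpha : pset Sigma -> A} {gamma : A -> pset Sigma}.
Hypothesis alpha_mono : forall S T, psubset S T -> alpha S <= alpha T.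
Hypothesis alpha_gamma : forall a, alpha (gamma a) = a.
Hypothesis gamma_adj : forall S b, alpha S <= b <-> psubset S (gamma b).

Section Represents.

Context {a : A} {C : pset Sigma}.
Hypothesis represents : forall S, alpha S <= a <-> psubset S C.

Lemma represents_eq_alpha : a = alpha C.
Proof.
apply/le_anti/andP; split; last by apply/represents.
rewrite -[a]alpha_gamma; apply: alpha_mono.
by apply/represents; rewrite alpha_gamma.
Qed.

Lemma represents_gamma_alpha : gamma (alpha C) = C.
Proof.
have subC S : psubset S (gamma (alpha C)) <-> psubset S C.
  by rewrite -gamma_adj -represents_eq_alpha represents.
by apply: pset_ext; [apply/subC | apply/subC].
Qed.

End Represents.

Context {AP Op : Type} {arity : Op -> nat} {Ip : AP -> pset Sigma}.
Context {If : forall f : Op, ('I_(arity f) -> pset Sigma) -> pset Sigma}.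

Lemma strongly_preserving_eq_alpha {asem : form AP arity -> A} :
  strongly_preserving Ip If alpha asem ->
  forall phi, asem phi = alpha (sem Ip If phi).
Proof. by move=> sp phi; apply: represents_eq_alpha; apply: sp. Qed.

Lemma sem_induced_eq_alpha :
  (forall phi, gamma (alpha (sem Ip If phi)) = sem Ip If phi) ->
  forall phi, sem (induced_Ip alpha Ip) (induced_If alpha gamma If) phi
              = alpha (sem Ip If phi).
Proof.
move=> closed; elim=> [p|f args IH] //=.
rewrite /induced_If; congr (alpha (If f _)).
by apply: functional_extensionality => i; rewrite IH closed.
Qed.

Lemma strongly_preserving_induced {asem : form AP arity -> A} :
  strongly_preserving Ip If alpha asem ->
  strongly_preserving Ip If alpha
    (sem (induced_Ip alpha Ip) (induced_If alpha gamma If)).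
Proof.
move=> sp phi S.
have closed psi : gamma (alpha (sem Ip If psi)) = sem Ip If psi.
  exact: represents_gamma_alpha (sp psi).
by rewrite sem_induced_eq_alpha // -(strongly_preserving_eq_alpha sp).
Qed.

End StrongPreservation.

Theorem lemma5p3 (AP : Type) (Op : finType) (arity : Op -> nat)
  (arity_pos : forall f : Op, (0 < arity f)%N)
  (Sigma : Type) (Ip : AP -> pset Sigma)
  (If : forall f : Op, ('I_(arity f) -> pset Sigma) -> pset Sigma)
  (d : Order.disp_t) (A : porderType d)
  (alpha : pset Sigma -> A) (gamma : A -> pset Sigma)
  (GI : galois_insertion alpha gamma) :
  (forall (Ip1 Ip2 : AP -> A)
          (If1 If2 : forall f : Op, ('I_(arity f) -> A) -> A),
      strongly_preserving Ip If alpha (sem Ip1 If1) ->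
      strongly_preserving Ip If alpha (sem Ip2 If2) ->
      forall phi : form AP arity, sem Ip1 If1 phi = sem Ip2 If2 phi)
  /\
  (forall (Ip' : AP -> A) (If' : forall f : Op, ('I_(arity f) -> A) -> A),
      strongly_preserving Ip If alpha (sem Ip' If') ->
      strongly_preserving Ip If alpha
        (sem (induced_Ip alpha Ip) (induced_If alpha gamma If))).
Proof.
have [_ [alpha_mono [_ [gamma_adj alpha_gamma]]]] := GI.
split=> [Ip1 Ip2 If1 If2 sp1 sp2 phi | Ip' If'].
  by rewrite (strongly_preserving_eq_alpha alpha_mono alpha_gamma sp1)
             (strongly_preserving_eq_alpha alpha_mono alpha_gamma sp2).
exact: strongly_preserving_induced.
Qed.
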